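(* Let $v,v'$ be two different words in the alphabet $\{y,yx\}$ (i.e. products of the subwords $y$ and $yx$, without inverses). Then $v\neq v'$ in the Baumslag–Gersten group $G=\langle x,y,t\mid x^y=x^2,\ x^t=y\rangle$.
   Context: $a^b$ denotes $b^{-1}ab$. *)

(* The Baumslag-Gersten group G = < x, y, t | x^y = x^2, x^t = y >
   is given literally by its presentation: words over the letters x^{±1}, y^{±1},
   t^{±1}, with equality in G being the congruence generated by free
   cancellation and insertion/deletion of relators (i.e. u = v in F/N). *)
From Stdlib Require Import List.
Import ListNotations.

Inductive gen : Type := gx | gy | gt.

(* a letter: generator together with a flag, true = inverse *)
Definition letter : Type := (gen * bool)%type.
Definition word : Type := list letter.

Definition inv_letter (a : letter) : letter := (fst a, negb (snd a)).

Definition Lx : letter := (gx, false).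
Definition Lxi : letter := (gx, true).
Definition Ly : letter := (gy, false).
Definition Lyi : letter := (gy, true).
Definition Lt : letter := (gt, false).
Definition Lti : letter := (gt, true).

(* a^b = b^{-1} a b.
   Relator 1:  x^y x^{-2} = y^{-1} x y x^{-1} x^{-1}
   Relator 2:  x^t y^{-1} = t^{-1} x t y^{-1} *)
Definition BG_relators : list word :=
  [ [Lyi; Lx; Ly; Lxi; Lxi] ; [Lti; Lx; Lt; Lyi] ].

Inductive BG_eq : word -> word -> Prop :=
| BG_refl u : BG_eq u u
| BG_sym u v : BG_eq u v -> BG_eq v u
| BG_trans u v w : BG_eq u v -> BG_eq v w -> BG_eq u w
| BG_free u v a : BG_eq (u ++ a :: inv_letter a :: v) (u ++ v)
| BG_rel u v r : In r BG_relators -> BG_eq (u ++ r ++ v) (u ++ v).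

Definition yyx_letter (b : bool) : word := if b then [Ly; Lx] else [Ly].
Definition yyx_word (s : list bool) : word := concat (map yyx_letter s).

(* G acts on the right on R x Z.  At level k, x translates the real coordinate
   by 2^k and y moves one level down, which realises x^y = x^2; t sends (a, k)
   to (k + frac(a/2^k), -floor(a/2^k)), a bijection under which x becomes y.
   Starting from (0, 0), a word in y and yx of length n ends at level -n with
   real coordinate the binary fraction 0.v_1 v_2 ... v_n (digit 1 for yx,
   0 for y), so equal elements of G come from equal words. *)

From Stdlib Require Import List Reals Lra Lia ZArith.
Import ListNotations.
Open Scope R_scope.

Lemma Int_part_bounds (r : R) : IZR (Int_part r) <= r < IZR (Int_part r) + 1.
Proof. destruct (base_Int_part r); lra. Qed.

Definition pow2 (k : Z) : R := powerRZ 2 k.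

Lemma pow2_pos (k : Z) : 0 < pow2 k.
Proof. apply powerRZ_lt; lra. Qed.

Lemma pow2_succ (k : Z) : pow2 (k + 1) = 2 * pow2 k.
Proof. unfold pow2; rewrite powerRZ_add by lra; simpl; lra. Qed.

Definition state : Type := (R * Z)%type.

Definition tau (s : state) : state :=
  let (a, k) := s in
  let q := a / pow2 k in
  (IZR k + frac_part q, (- Int_part q)%Z).

Definition tau_inv (s : state) : state :=
  let (b, m) := s in
  let c := Int_part b in
  (pow2 c * (b - IZR c - IZR m), c).

Lemma tau_tau_inv (s : state) : tau (tau_inv s) = s.
Proof.
  destruct s as [b m]; unfold tau_inv, tau, frac_part.
  set (c := Int_part b).
  assert (Hdiv : pow2 c * (b - IZR c - IZR m) / pow2 c = b - IZR c - IZR m).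
  { field; apply Rgt_not_eq, pow2_pos. }
  assert (Hfloor : Int_part (b - IZR c - IZR m) = (- m)%Z).
  { symmetry; apply Int_part_spec; rewrite opp_IZR.
    pose proof (Int_part_bounds b) as Hb; fold c in Hb; lra. }
  rewrite Hdiv, Hfloor, opp_IZR; f_equal; [lra | lia].
Qed.

Lemma tau_inv_tau (s : state) : tau_inv (tau s) = s.
Proof.
  destruct s as [a k]; unfold tau, tau_inv, frac_part.
  set (q := a / pow2 k).
  assert (Hfloor : Int_part (IZR k + (q - IZR (Int_part q))) = k).
  { symmetry; apply Int_part_spec; pose proof (Int_part_bounds q); lra. }
  rewrite Hfloor, opp_IZR; f_equal.
  unfold q; field; apply Rgt_not_eq, pow2_pos.
Qed.

Definition act_letter (l : letter) (s : state) : state :=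
  match l, s with
  | (gx, false), (a, k) => (a + pow2 k, k)
  | (gx, true), (a, k) => (a - pow2 k, k)
  | (gy, false), (a, k) => (a, (k - 1)%Z)
  | (gy, true), (a, k) => (a, (k + 1)%Z)
  | (gt, false), s => tau s
  | (gt, true), s => tau_inv s
  end.

Definition act (w : word) (s : state) : state :=
  fold_left (fun s l => act_letter l s) w s.

Lemma act_app (u v : word) (s : state) : act (u ++ v) s = act v (act u s).
Proof. apply fold_left_app. Qed.

Lemma act_letterK (l : letter) (s : state) :
  act_letter (inv_letter l) (act_letter l s) = s.
Proof.
  destruct l as [[] []].
  5: apply tau_tau_inv.
  5: apply tau_inv_tau.
  all: destruct s as [a k]; simpl; f_equal; lra || lia.
Qed.

Lemma act_relator (r : word) (s : state) : In r BG_relators -> act r s = s.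
Proof.
  destruct s as [a k]; intros [<- | [<- | []]]; unfold act; simpl.
  - replace (k + 1 - 1)%Z with k by lia.
    rewrite pow2_succ; f_equal; lra.
  - unfold frac_part; set (c := Int_part a).
    assert (Hdiv : (pow2 c * (a - IZR c - IZR k) + pow2 c) / pow2 c
                   = a - IZR c - IZR k + 1).
    { field; apply Rgt_not_eq, pow2_pos. }
    assert (Hfloor : Int_part (a - IZR c - IZR k + 1) = (1 - k)%Z).
    { symmetry; apply Int_part_spec; rewrite minus_IZR.
      pose proof (Int_part_bounds a) as Ha; fold c in Ha; lra. }
    rewrite Hdiv, Hfloor, minus_IZR; f_equal; [lra | lia].
Qed.

Lemma act_BG_eq (u v : word) : BG_eq u v -> forall s, act u s = act v s.
Proof.
  induction 1 as [| | | u v l | u v r Hr]; intros s.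
  - reflexivity.
  - symmetry; auto.
  - congruence.
  - rewrite !act_app; unfold act; cbn [fold_left]; rewrite act_letterK; reflexivity.
  - rewrite !act_app, (act_relator r); auto.
Qed.

Fixpoint binary_value (v : list bool) (k : Z) : R :=
  match v with
  | [] => 0
  | b :: v => (if b then pow2 (k - 1) else 0) + binary_value v (k - 1)
  end.

Lemma act_yyx_word (v : list bool) (a : R) (k : Z) :
  act (yyx_word v) (a, k) = (a + binary_value v k, (k - Z.of_nat (length v))%Z).
Proof.
  revert a k; induction v as [| [] v IH]; intros a k; simpl.
  - f_equal; [lra | lia].
  - rewrite IH; f_equal; [lra | lia].
  - rewrite IH; f_equal; [lra | lia].
Qed.

Lemma binary_value_bounds (v : list bool) (k : Z) :
  0 <= binary_value v k < pow2 k.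
Proof.
  revert k; induction v as [| b v IH]; intros k; simpl.
  - pose proof (pow2_pos k); lra.
  - pose proof (IH (k - 1)%Z); pose proof (pow2_pos (k - 1)).
    pose proof (pow2_succ (k - 1)) as Hsucc.
    replace (k - 1 + 1)%Z with k in Hsucc by lia.
    destruct b; lra.
Qed.

Lemma binary_value_inj (v v' : list bool) (k : Z) :
  length v = length v' -> binary_value v k = binary_value v' k -> v = v'.
Proof.
  revert v' k; induction v as [| b v IH]; intros [| b' v'] k Hlen Heq;
    simpl in *; try discriminate; [reflexivity |].
  injection Hlen as Hlen.
  pose proof (binary_value_bounds v (k - 1)).
  pose proof (binary_value_bounds v' (k - 1)).
  destruct b, b'; try lra; f_equal; apply (IH v' (k - 1)%Z); auto; lra.
Qed.

Theorem lemma2p2 (v v' : list bool) :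
  v <> v' -> ~ BG_eq (yyx_word v) (yyx_word v').
Proof.
  intros Hne Heq; apply Hne.
  pose proof (act_BG_eq _ _ Heq (0, 0%Z)) as Hact.
  rewrite !act_yyx_word in Hact; injection Hact as Hvalue Hlevel.
  apply (binary_value_inj v v' 0%Z); lia || lra.
Qed.
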